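(* Consider $N$ systems $\dot x_i = f(x_i,u_i,d_i)$, $y_i = h(x_i)$, $i\in\mathcal N=\{1,\dots,N\}$, that are incrementally output-feedback passive (iOFP) with constant $\sigma\in\mathbb R$, with disturbances $d_i=R_iw_i$ generated by exosystems $\dot w_i=s_i(w_i)$ satisfying the monotonicity condition below, and interconnected over a connected undirected graph with adjacency matrix $A=[a_{ij}]$. For each $i\in\mathcal N$ let $\rho_i=\sum_{j\in\mathcal N}a_{ij}(y_j-y_i)$ and apply the controller $$\dot\xi_i = s_i(\xi_i)-R_i^\top\rho_i,\qquad \dot k_i=\gamma_i\rho_i^\top\rho_i,\qquad u_i=-R_i\xi_i+k_i\rho_i,$$ with arbitrary gains $\gamma_i>0$ and arbitrary initial conditions $\xi_i(0)\in\mathbb R^{m_i}$, $k_i(0)\in\mathbb R$. If the solution $(x(t),\xi(t),k(t))$ of the closed-loop system is bounded on $[0,\infty)$, then the outputs synchronize asymptotically; in particular $\lim_{t\to\infty}\|y_i(t)-\bar y(t)\|=0$ for all $i\in\mathcal N$, where $\bar y=\frac1N\sum_{j}y_j$.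
   Context: Each system has state $x_i\in\mathbb R^n$, input $u_i\in\mathbb R^q$, output $y_i\in\mathbb R^q$, disturbance $d_i\in\mathbb R^q$; $f$ is locally Lipschitz and $h$ is continuously differentiable. iOFP with constant $\sigma\in\mathbb R$ means: there exist $\Phi:\mathbb R^n\times\mathbb R^n\to\mathbb R_{\ge0}$ (continuously differentiable) and class-$\mathcal K_\infty$ functions $\underline\alpha,\overline\alpha$ with $\underline\alpha(\|x_i-x_i'\|)\le\Phi(x_i,x_i')\le\overline\alpha(\|x_i-x_i'\|)$ and $\frac{\partial\Phi}{\partial x_i}(x_i,x_i')f(x_i,u_i,d_i)+\frac{\partial\Phi}{\partial x_i'}(x_i,x_i')f(x_i',u_i',d_i')\le\sigma\|y_i-y_i'\|^2+(y_i-y_i')^\top\big((u_i+d_i)-(u_i'+d_i')\big)$ for all $(x_i,u_i,d_i),(x_i',u_i',d_i')\in\mathbb R^n\times\mathbb R^q\times\mathbb R^q$, where $y_i=h(x_i)$, $y_i'=h(x_i')$. Exosystems: $w_i\in\mathbb R^{m_i}$, $\dot w_i=s_i(w_i)$, $d_i=R_iw_i$ with $R_i\in\mathbb R^{q\times m_i}$, $s_i$ locally Lipschitz, $s_i(0)=0$ and $(w_i-w_i')^\top(s_i(w_i)-s_i(w_i'))\le0$ for all $w_i,w_i'$. The graph is undirected and connected: $A$ is symmetric nonnegative with zero diagonal, $a_{ij}>0$ iff $(i,j)$ is an edge. *)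

From Stdlib Require Import Reals Lra Relations.
From Stdlib Require Fin.
Open Scope R_scope.

Definition vec (n : nat) := Fin.t n -> R.
Definition mat (q m : nat) := Fin.t q -> Fin.t m -> R.

Fixpoint fsum (n : nat) : (Fin.t n -> R) -> R :=
  match n return (Fin.t n -> R) -> R with
  | O => fun _ => 0
  | S p => fun g => g Fin.F1 + fsum p (fun i => g (Fin.FS i))
  end.

Definition vadd {n} (a b : vec n) : vec n := fun c => a c + b c.
Definition vsub {n} (a b : vec n) : vec n := fun c => a c - b c.
Definition vopp {n} (a : vec n) : vec n := fun c => - a c.
Definition vscale {n} (r : R) (a : vec n) : vec n := fun c => r * a c.
Definition vdot {n} (a b : vec n) : R := fsum n (fun c => a c * b c).
Definition vnorm {n} (a : vec n) : R := sqrt (vdot a a).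
Definition vzero {n} : vec n := fun _ => 0.
Definition vfsum {N n} (g : Fin.t N -> vec n) : vec n := fun c => fsum N (fun j => g j c).
Definition matvec {q m} (M : mat q m) (v : vec m) : vec q :=
  fun r => fsum m (fun c => M r c * v c).
Definition matTvec {q m} (M : mat q m) (v : vec q) : vec m :=
  fun c => fsum q (fun r => M r c * v r).

Definition classKinf (al : R -> R) : Prop :=
  al 0 = 0 /\
  (forall r, 0 <= r -> forall eps, 0 < eps -> exists del, 0 < del /\
     forall s, 0 <= s -> Rabs (s - r) < del -> Rabs (al s - al r) < eps) /\
  (forall r s, 0 <= r -> r < s -> al r < al s) /\
  (forall M, exists r, 0 <= r /\ M < al r).

Definition C1_pair {n} (Phi : vec n -> vec n -> R) (D1 D2 : vec n -> vec n -> vec n) : Prop :=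
  (forall x x' : vec n, forall eps, 0 < eps -> exists del, 0 < del /\
     forall hx hx' : vec n,
       sqrt (vnorm hx ^ 2 + vnorm hx' ^ 2) < del ->
       Rabs (Phi (vadd x hx) (vadd x' hx') - Phi x x' - vdot (D1 x x') hx - vdot (D2 x x') hx')
         <= eps * sqrt (vnorm hx ^ 2 + vnorm hx' ^ 2)) /\
  (forall x x' : vec n, forall eps, 0 < eps -> exists del, 0 < del /\
     forall z z' : vec n,
       sqrt (vnorm (vsub z x) ^ 2 + vnorm (vsub z' x') ^ 2) < del ->
       vnorm (vsub (D1 z z') (D1 x x')) < eps /\ vnorm (vsub (D2 z z') (D2 x x')) < eps).

Definition C1_map {n q} (h : vec n -> vec q) : Prop :=
  exists J : vec n -> mat q n,
    (forall x : vec n, forall eps, 0 < eps -> exists del, 0 < del /\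
       forall e : vec n, vnorm e < del ->
         vnorm (vsub (vsub (h (vadd x e)) (h x)) (matvec (J x) e)) <= eps * vnorm e) /\
    (forall x : vec n, forall eps, 0 < eps -> exists del, 0 < del /\
       forall z : vec n, vnorm (vsub z x) < del ->
         forall r c, Rabs (J z r c - J x r c) < eps).

Definition loc_lipschitz3 {n q} (f : vec n -> vec q -> vec q -> vec n) : Prop :=
  forall (x : vec n) (u d : vec q), exists del L, 0 < del /\ 0 <= L /\
    forall (x1 x2 : vec n) (u1 u2 d1 d2 : vec q),
      sqrt (vnorm (vsub x1 x) ^ 2 + vnorm (vsub u1 u) ^ 2 + vnorm (vsub d1 d) ^ 2) < del ->
      sqrt (vnorm (vsub x2 x) ^ 2 + vnorm (vsub u2 u) ^ 2 + vnorm (vsub d2 d) ^ 2) < del ->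
      vnorm (vsub (f x1 u1 d1) (f x2 u2 d2))
        <= L * sqrt (vnorm (vsub x1 x2) ^ 2 + vnorm (vsub u1 u2) ^ 2 + vnorm (vsub d1 d2) ^ 2).

Definition loc_lipschitz1 {m} (s : vec m -> vec m) : Prop :=
  forall w : vec m, exists del L, 0 < del /\ 0 <= L /\
    forall w1 w2 : vec m, vnorm (vsub w1 w) < del -> vnorm (vsub w2 w) < del ->
      vnorm (vsub (s w1) (s w2)) <= L * vnorm (vsub w1 w2).

Definition iOFP {n q} (f : vec n -> vec q -> vec q -> vec n) (h : vec n -> vec q) (sigma : R) : Prop :=
  exists (Phi : vec n -> vec n -> R) (D1 D2 : vec n -> vec n -> vec n) (alo ahi : R -> R),
    (forall x x', 0 <= Phi x x') /\
    C1_pair Phi D1 D2 /\ classKinf alo /\ classKinf ahi /\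
    (forall x x', alo (vnorm (vsub x x')) <= Phi x x' /\ Phi x x' <= ahi (vnorm (vsub x x'))) /\
    (forall (x x' : vec n) (u d u' d' : vec q),
       vdot (D1 x x') (f x u d) + vdot (D2 x x') (f x' u' d')
         <= sigma * vnorm (vsub (h x) (h x')) ^ 2
            + vdot (vsub (h x) (h x')) (vsub (vadd u d) (vadd u' d'))).

Definition exo_ok {m} (s : vec m -> vec m) : Prop :=
  loc_lipschitz1 s /\ s vzero = vzero /\
  (forall w w' : vec m, vdot (vsub w w') (vsub (s w) (s w')) <= 0).

Definition undirected_connected {N} (a : Fin.t N -> Fin.t N -> R) : Prop :=
  (forall i j, a i j = a j i) /\ (forall i j, 0 <= a i j) /\ (forall i, a i i = 0) /\
  (forall i j, clos_refl_trans (Fin.t N) (fun i j => 0 < a i j) i j).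

Definition has_vderiv {n} (g : R -> vec n) (g' : vec n) (t : R) : Prop :=
  forall c, derivable_pt_lim (fun s => g s c) t (g' c).

(* Since k_i' = gamma_i |rho_i|^2 and k_i is bounded, |rho_i|^2 is integrable on [0, oo).
   The bounds on (x, xi, k), together with the nonexpansive exosystems, bound u_i and d_i, so
   x_i is Lipschitz in time and rho_i is uniformly continuous; Barbalat's argument then gives
   rho_i -> 0. The Laplacian identity sum_i y_i rho_i = -1/2 sum_ij a_ij |y_i - y_j|^2 makes
   every edge disagreement vanish, and connectivity propagates this to all pairs, hence to
   y_i - ybar. *)

From Stdlib Require Import Reals Lra Relations.
From Stdlib Require Fin.
From Stdlib Require Import Lia Classical ClassicalEpsilon FunctionalExtensionality.
Open Scope R_scope.

Lemma fsum_ext n (g1 g2 : Fin.t n -> R) :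
  (forall c, g1 c = g2 c) -> fsum n g1 = fsum n g2.
Proof.
  induction n; simpl; intros E; auto.
  rewrite E, (IHn (fun i => g1 (Fin.FS i)) (fun i => g2 (Fin.FS i))); auto.
Qed.

Lemma fsum_add n (g1 g2 : Fin.t n -> R) :
  fsum n (fun c => g1 c + g2 c) = fsum n g1 + fsum n g2.
Proof.
  induction n; simpl; [lra|].
  rewrite (IHn (fun i => g1 (Fin.FS i)) (fun i => g2 (Fin.FS i))); lra.
Qed.

Lemma fsum_scale n r (g : Fin.t n -> R) : fsum n (fun c => r * g c) = r * fsum n g.
Proof.
  induction n; simpl; [lra|].
  rewrite (IHn (fun i => g (Fin.FS i))); lra.
Qed.

Lemma fsum_sub n (g1 g2 : Fin.t n -> R) :
  fsum n (fun c => g1 c - g2 c) = fsum n g1 - fsum n g2.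
Proof.
  replace (fsum n g1 - fsum n g2) with (fsum n g1 + (-1) * fsum n g2) by lra.
  rewrite <- fsum_scale, <- fsum_add. apply fsum_ext; intros; lra.
Qed.

Lemma fsum_const n r : fsum n (fun _ => r) = INR n * r.
Proof. induction n; simpl; [lra|]. rewrite IHn. destruct n; simpl; lra. Qed.

Lemma fsum_le n (g1 g2 : Fin.t n -> R) :
  (forall c, g1 c <= g2 c) -> fsum n g1 <= fsum n g2.
Proof.
  induction n; simpl; intros H; [lra|].
  pose proof (H Fin.F1).
  pose proof (IHn (fun i => g1 (Fin.FS i)) (fun i => g2 (Fin.FS i)) (fun i => H (Fin.FS i))).
  lra.
Qed.

Lemma fsum_ge0 n (g : Fin.t n -> R) : (forall c, 0 <= g c) -> 0 <= fsum n g.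
Proof.
  intros H. rewrite <- (Rmult_0_r (INR n)), <- fsum_const. apply fsum_le; auto.
Qed.

Lemma Rabs_fsum_le n (g : Fin.t n -> R) : Rabs (fsum n g) <= fsum n (fun c => Rabs (g c)).
Proof.
  induction n; simpl; [rewrite Rabs_R0; lra|].
  pose proof (IHn (fun i => g (Fin.FS i))). pose proof (Rabs_triang (g Fin.F1) (fsum n (fun i => g (Fin.FS i)))).
  lra.
Qed.

Lemma fsum_ge_term n (g : Fin.t n -> R) c : (forall c, 0 <= g c) -> g c <= fsum n g.
Proof.
  induction n; intros H; [apply (Fin.case0 (fun c => g c <= fsum 0 g) c)|].
  apply (Fin.caseS' c (fun c => g c <= fsum (S n) g)); simpl.
  - pose proof (fsum_ge0 n (fun i => g (Fin.FS i)) (fun i => H (Fin.FS i))). lra.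
  - intros p. pose proof (IHn (fun i => g (Fin.FS i)) p (fun i => H (Fin.FS i))).
    pose proof (H Fin.F1). simpl in *. lra.
Qed.

Lemma fsum_comm n m (g : Fin.t n -> Fin.t m -> R) :
  fsum n (fun i => fsum m (fun j => g i j)) = fsum m (fun j => fsum n (fun i => g i j)).
Proof.
  induction n; simpl; [rewrite fsum_const; lra|].
  rewrite (IHn (fun i j => g (Fin.FS i) j)), <- fsum_add. reflexivity.
Qed.

Lemma derivable_pt_lim_fsum n (g : R -> Fin.t n -> R) (g' : Fin.t n -> R) t :
  (forall c, derivable_pt_lim (fun s => g s c) t (g' c)) ->
  derivable_pt_lim (fun s => fsum n (g s)) t (fsum n g').
Proof.
  revert g g'; induction n; intros g g' H; simpl; [apply derivable_pt_lim_const|].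
  apply (derivable_pt_lim_plus (fun s => g s Fin.F1) (fun s => fsum n (fun i => g s (Fin.FS i)))).
  - apply H.
  - apply (IHn (fun s i => g s (Fin.FS i))). intros; apply H.
Qed.

Lemma vnorm_ge0 n (v : vec n) : 0 <= vnorm v.
Proof. apply sqrt_pos. Qed.

Lemma Rabs_le_vnorm n (v : vec n) c : Rabs (v c) <= vnorm v.
Proof.
  unfold vnorm. rewrite <- sqrt_Rsqr_abs. apply sqrt_le_1_alt.
  apply (fsum_ge_term n (fun c => v c * v c)). intros; nra.
Qed.

Lemma vnorm_le_sum_Rabs n (v : vec n) : vnorm v <= fsum n (fun c => Rabs (v c)).
Proof.
  assert (Hsq : vdot v v <= fsum n (fun c => Rabs (v c)) ^ 2).
  { unfold vdot. induction n; simpl; [lra|].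
    specialize (IHn (fun i => v (Fin.FS i))). simpl in IHn.
    pose proof (fsum_ge0 n (fun c => Rabs (v (Fin.FS c))) (fun c => Rabs_pos _)).
    pose proof (Rabs_pos (v Fin.F1)). pose proof (Rsqr_abs (v Fin.F1)). unfold Rsqr in *. nra. }
  pose proof (fsum_ge0 n (fun c => Rabs (v c)) (fun c => Rabs_pos _)) as H0.
  unfold vnorm. rewrite <- (sqrt_pow2 _ H0). apply sqrt_le_1_alt, Hsq.
Qed.

Lemma vnorm_le_of_Rabs_le n (v : vec n) B : (forall c, Rabs (v c) <= B) -> vnorm v <= INR n * B.
Proof.
  intros H. eapply Rle_trans; [apply vnorm_le_sum_Rabs|].
  rewrite <- fsum_const. apply fsum_le, H.
Qed.

Lemma vnorm_vsub_diag n (v : vec n) : vnorm (vsub v v) = 0.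
Proof.
  unfold vnorm, vdot, vsub. rewrite (fsum_ext n _ (fun _ => 0)) by (intros; ring).
  rewrite fsum_const, Rmult_0_r. apply sqrt_0.
Qed.

Lemma Rabs_matvec_le q m (J : mat q m) e r :
  Rabs (matvec J e r) <= fsum q (fun r => fsum m (fun c => Rabs (J r c))) * vnorm e.
Proof.
  eapply Rle_trans; [apply Rabs_fsum_le|].
  apply Rle_trans with (fsum m (fun c => Rabs (J r c)) * vnorm e).
  - rewrite Rmult_comm, <- fsum_scale. apply fsum_le; intros c. rewrite Rabs_mult.
    pose proof (Rabs_le_vnorm _ e c). pose proof (Rabs_pos (J r c)). nra.
  - apply Rmult_le_compat_r; [apply vnorm_ge0|].
    apply (fsum_ge_term q (fun r => fsum m (fun c => Rabs (J r c)))).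
    intros; apply fsum_ge0; intros; apply Rabs_pos.
Qed.

Lemma derivable_pt_lim_vdot_self n (g : R -> vec n) (g' : vec n) t :
  has_vderiv g g' t -> derivable_pt_lim (fun s => vdot (g s) (g s)) t (2 * vdot (g t) g').
Proof.
  intros H. unfold vdot. rewrite <- fsum_scale.
  rewrite (fsum_ext n _ (fun c => g' c * g t c + g t c * g' c)) by (intros; ring).
  apply (derivable_pt_lim_fsum n (fun s c => g s c * g s c)). intros c.
  apply (derivable_pt_lim_mult (fun s => g s c) (fun s => g s c)); apply H.
Qed.

Definition vanishes (g : R -> R) : Prop :=
  forall eps, 0 < eps -> exists T, forall t, T <= t -> Rabs (g t) < eps.

Lemma vanishes_ext g1 g2 : vanishes g1 -> (forall t, g2 t = g1 t) -> vanishes g2.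
Proof. intros H E eps He. destruct (H eps He) as [T HT]. exists T; intros. rewrite E; auto. Qed.

Lemma vanishes_dominated g g' :
  vanishes g' -> (exists T0, forall t, T0 <= t -> Rabs (g t) <= g' t) -> vanishes g.
Proof.
  intros H [T0 H0] eps He. destruct (H eps He) as [T HT]. exists (Rmax T0 T); intros t Ht.
  specialize (H0 t (Rle_trans _ _ _ (Rmax_l _ _) Ht)).
  specialize (HT t (Rle_trans _ _ _ (Rmax_r _ _) Ht)).
  apply Rabs_def2 in HT. lra.
Qed.

Lemma vanishes_Rabs g : vanishes g -> vanishes (fun t => Rabs (g t)).
Proof. intros H eps He. destruct (H eps He) as [T HT]. exists T; intros. rewrite Rabs_Rabsolu; auto. Qed.

Lemma vanishes_add g1 g2 : vanishes g1 -> vanishes g2 -> vanishes (fun t => g1 t + g2 t).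
Proof.
  intros H1 H2 eps He.
  destruct (H1 (eps / 2)) as [T1 HT1]; [lra|]. destruct (H2 (eps / 2)) as [T2 HT2]; [lra|].
  exists (Rmax T1 T2); intros t Ht.
  specialize (HT1 t (Rle_trans _ _ _ (Rmax_l _ _) Ht)).
  specialize (HT2 t (Rle_trans _ _ _ (Rmax_r _ _) Ht)).
  pose proof (Rabs_triang (g1 t) (g2 t)). lra.
Qed.

Lemma vanishes_scale c g : vanishes g -> vanishes (fun t => c * g t).
Proof.
  intros H eps He. pose proof (Rabs_pos c).
  destruct (H (eps / (Rabs c + 1))) as [T HT]; [apply Rdiv_lt_0_compat; lra|].
  exists T; intros t Ht. specialize (HT t Ht). rewrite Rabs_mult.
  apply Rle_lt_trans with ((Rabs c + 1) * Rabs (g t)); [pose proof (Rabs_pos (g t)); nra|].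
  apply (Rmult_lt_compat_l (Rabs c + 1)) in HT; [|lra]. field_simplify in HT; lra.
Qed.

Lemma vanishes_fsum n (g : R -> Fin.t n -> R) :
  (forall c, vanishes (fun t => g t c)) -> vanishes (fun t => fsum n (g t)).
Proof.
  induction n; simpl; intros H.
  - intros eps He; exists 0; intros; rewrite Rabs_R0; lra.
  - apply (vanishes_add (fun t => g t Fin.F1)); [apply H|].
    apply (IHn (fun t i => g t (Fin.FS i))). intros; apply H.
Qed.

Lemma vanishes_of_sq g c : 0 < c -> vanishes (fun t => c * g t ^ 2) -> vanishes g.
Proof.
  intros Hc H eps He.
  destruct (H (c * eps ^ 2)) as [T HT]; [apply Rmult_lt_0_compat; [|apply pow_lt]; auto|].
  exists T; intros t Ht. specialize (HT t Ht). apply Rnot_le_lt; intros Hle.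
  assert (eps ^ 2 <= g t ^ 2) by (rewrite <- (pow2_abs (g t)); apply pow_incr; lra).
  rewrite Rabs_right in HT by (apply Rle_ge, Rmult_le_pos; [lra | apply pow2_ge_0]). nra.
Qed.

Definition unif_cont_from (t0 : R) (g : R -> R) : Prop :=
  forall eps, 0 < eps -> exists del, 0 < del /\
    forall t t', t0 <= t -> t0 <= t' -> Rabs (t - t') <= del -> Rabs (g t - g t') < eps.

Lemma unif_cont_from_ext t0 g1 g2 :
  unif_cont_from t0 g1 -> (forall t, g2 t = g1 t) -> unif_cont_from t0 g2.
Proof.
  intros H E eps He. destruct (H eps He) as [del [Hd H']]. exists del; split; auto.
  intros. rewrite !E; auto.
Qed.

Lemma unif_cont_from_add t0 g1 g2 :
  unif_cont_from t0 g1 -> unif_cont_from t0 g2 -> unif_cont_from t0 (fun t => g1 t + g2 t).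
Proof.
  intros H1 H2 eps He.
  destruct (H1 (eps / 2)) as [d1 [Hd1 H1']]; [lra|]. destruct (H2 (eps / 2)) as [d2 [Hd2 H2']]; [lra|].
  exists (Rmin d1 d2); split; [apply Rmin_glb_lt; auto|]. intros t t' Ht Ht' Htt.
  specialize (H1' t t' Ht Ht' (Rle_trans _ _ _ Htt (Rmin_l _ _))).
  specialize (H2' t t' Ht Ht' (Rle_trans _ _ _ Htt (Rmin_r _ _))).
  replace (g1 t + g2 t - (g1 t' + g2 t')) with ((g1 t - g1 t') + (g2 t - g2 t')) by ring.
  pose proof (Rabs_triang (g1 t - g1 t') (g2 t - g2 t')). lra.
Qed.

Lemma unif_cont_from_scale t0 c g : unif_cont_from t0 g -> unif_cont_from t0 (fun t => c * g t).
Proof.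
  intros H eps He. pose proof (Rabs_pos c).
  destruct (H (eps / (Rabs c + 1))) as [del [Hd H']]; [apply Rdiv_lt_0_compat; lra|].
  exists del; split; auto. intros t t' Ht Ht' Htt. specialize (H' t t' Ht Ht' Htt).
  rewrite <- Rmult_minus_distr_l, Rabs_mult.
  apply Rle_lt_trans with ((Rabs c + 1) * Rabs (g t - g t')); [pose proof (Rabs_pos (g t - g t')); nra|].
  apply (Rmult_lt_compat_l (Rabs c + 1)) in H'; [|lra]. field_simplify in H'; lra.
Qed.

Lemma unif_cont_from_fsum t0 n (g : R -> Fin.t n -> R) :
  (forall c, unif_cont_from t0 (fun t => g t c)) -> unif_cont_from t0 (fun t => fsum n (g t)).
Proof.
  induction n; simpl; intros H.
  - intros eps He; exists 1; split; [lra|]; intros. rewrite Rminus_0_r, Rabs_R0; lra.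
  - apply (unif_cont_from_add t0 (fun t => g t Fin.F1)); [apply H|].
    apply (IHn (fun t i => g t (Fin.FS i))). intros; apply H.
Qed.

Lemma unif_cont_from_sub t0 g1 g2 :
  unif_cont_from t0 g1 -> unif_cont_from t0 g2 -> unif_cont_from t0 (fun t => g1 t - g2 t).
Proof.
  intros H1 H2. apply (unif_cont_from_ext t0 (fun t => g1 t + -1 * g2 t)); [|intros; ring].
  apply unif_cont_from_add; [|apply unif_cont_from_scale]; auto.
Qed.

Lemma nondecreasing_of_deriv_ge0 (g g' : R -> R) a :
  (forall t, a < t -> derivable_pt_lim g t (g' t)) -> (forall t, a < t -> 0 <= g' t) ->
  forall t1 t2, a < t1 -> t1 <= t2 -> g t1 <= g t2.
Proof.
  intros Hd Hp t1 t2 H1 H12. destruct (Rle_lt_or_eq_dec _ _ H12) as [Hlt|<-]; [|lra].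
  destruct (MVT_cor2 g g' t1 t2) as [c [Hc1 Hc2]]; [lra| intros; apply Hd; lra|].
  specialize (Hp c ltac:(lra)). nra.
Qed.

Lemma lipschitz_of_deriv_bounded (g g' : R -> R) a B :
  (forall t, a < t -> derivable_pt_lim g t (g' t)) -> (forall t, a < t -> Rabs (g' t) <= B) ->
  forall t1 t2, a < t1 -> a < t2 -> Rabs (g t1 - g t2) <= B * Rabs (t1 - t2).
Proof.
  intros Hd Hp.
  assert (K : forall t1 t2, a < t1 -> t1 < t2 -> Rabs (g t1 - g t2) <= B * Rabs (t1 - t2)).
  { intros t1 t2 H1 H12.
    destruct (MVT_cor2 g g' t1 t2) as [c [Hc1 Hc2]]; [lra| intros; apply Hd; lra|].
    rewrite <- Rabs_Ropp, <- (Rabs_Ropp (t1 - t2)).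
    replace (- (g t1 - g t2)) with (g' c * - (t1 - t2)) by lra.
    rewrite Rabs_mult. apply Rmult_le_compat_r; [apply Rabs_pos | apply Hp; lra]. }
  intros t1 t2 H1 H2. destruct (Rtotal_order t1 t2) as [Hlt|[<-|Hgt]]; [auto| |].
  - rewrite !Rminus_diag, Rabs_R0, Rmult_0_r. lra.
  - rewrite <- Rabs_Ropp, <- (Rabs_Ropp (t1 - t2)), !Ropp_minus_distr. apply K; lra.
Qed.

(* d/dt |w|^2 = 2 w.s(w) <= 0, by monotonicity of [s] against the equilibrium [s 0 = 0]. *)
Lemma exo_vnorm_nonincreasing m (s : vec m -> vec m) (w : R -> vec m) a :
  exo_ok s -> (forall t, a < t -> has_vderiv w (s (w t)) t) ->
  forall t1 t2, a < t1 -> t1 <= t2 -> vnorm (w t2) <= vnorm (w t1).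
Proof.
  intros [_ [Hs0 Hmon]] Hw t1 t2 H1 H12. apply sqrt_le_1_alt.
  enough (- vdot (w t1) (w t1) <= - vdot (w t2) (w t2)) by lra.
  apply (nondecreasing_of_deriv_ge0 (fun r => - vdot (w r) (w r))
           (fun r => - (2 * vdot (w r) (s (w r)))) a); auto.
  - intros r Hr. apply derivable_pt_lim_opp, derivable_pt_lim_vdot_self, Hw, Hr.
  - intros r _. specialize (Hmon (w r) vzero). rewrite Hs0 in Hmon.
    enough (vdot (w r) (s (w r)) <= 0) by lra.
    unfold vdot, vsub, vzero in *. erewrite fsum_ext; [exact Hmon|]. intros; simpl; ring.
Qed.

(* A nondecreasing bounded gain [k] with [k' >= gam rr^2] leaves [rr^2] integrable; uniform
   continuity of [rr] then forces [rr -> 0] (Barbalat): otherwise every excursion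
   [|rr| >= eps] raises [k] by a fixed amount. *)
Lemma vanishes_of_bounded_gain (k kd rr : R -> R) gam M t0 :
  0 < gam -> 0 < t0 ->
  (forall t, 0 < t -> derivable_pt_lim k t (kd t)) ->
  (forall t, 0 < t -> gam * rr t ^ 2 <= kd t) ->
  (forall t, 0 < t -> Rabs (k t) <= M) ->
  unif_cont_from t0 rr -> vanishes rr.
Proof.
  intros Hg Ht0 Hd Hr Hb Hu. apply NNPP; intros Hn.
  assert (Hx : exists eps, 0 < eps /\ forall T, exists t, T <= t /\ eps <= Rabs (rr t)).
  { apply NNPP; intros H. apply Hn. intros eps He. apply NNPP; intros H2. apply H.
    exists eps; split; auto. intros T. apply NNPP; intros H3. apply H2.
    exists T; intros t Ht. apply Rnot_le_lt; intros H4. apply H3. exists t; auto. }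
  destruct Hx as [eps [He Hx]].
  destruct (Hu (eps / 2)) as [del [Hdl Hdel]]; [lra|].
  set (eta := gam * (eps / 2) ^ 2 * del).
  assert (Heta : 0 < eta).
  { unfold eta. apply Rmult_lt_0_compat; auto. apply Rmult_lt_0_compat; auto. apply pow_lt; lra. }
  assert (Hmono : forall t1 t2, 0 < t1 -> t1 <= t2 -> k t1 <= k t2).
  { apply (nondecreasing_of_deriv_ge0 k kd 0 Hd). intros t Ht. specialize (Hr t Ht).
    pose proof (pow2_ge_0 (rr t)). nra. }
  assert (Step : forall t, t0 <= t -> exists t', t <= t' /\ k t + eta <= k t').
  { intros t Ht. destruct (Hx t) as [t1 [Ht1 Hr1]].
    exists (t1 + del); split; [lra|].
    destruct (MVT_cor2 k kd t1 (t1 + del)) as [c [Hc1 Hc2]]; [lra| intros; apply Hd; lra|].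
    assert (Rabs (rr t1 - rr c) < eps / 2) by (apply Hdel; try lra; rewrite Rabs_left; lra).
    assert (eps / 2 <= Rabs (rr c)).
    { pose proof (Rabs_triang_inv (rr t1) (rr c)). pose proof (Rabs_triang (rr t1 - rr c) (rr c)).
      replace (rr t1 - rr c + rr c) with (rr t1) in * by ring. lra. }
    assert ((eps / 2) ^ 2 <= rr c ^ 2) by (rewrite <- (pow2_abs (rr c)); apply pow_incr; lra).
    assert (eta <= kd c * del).
    { unfold eta. specialize (Hr c ltac:(lra)). apply Rmult_le_compat_r; nra. }
    assert (k t <= k t1) by (apply Hmono; lra). lra. }
  assert (Iter : forall j : nat, exists t, t0 <= t /\ k t0 + INR j * eta <= k t).
  { induction j as [|j [t [Ht Hkt]]]; [exists t0; simpl; lra|].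
    destruct (Step t Ht) as [t' [Ht' Hk']]. exists t'; split; [lra|]. rewrite S_INR. lra. }
  destruct (INR_archimed eta (2 * M) Heta) as [j Hj].
  destruct (Iter j) as [t [Ht Hkt]].
  pose proof (Hb t ltac:(lra)). pose proof (Hb t0 Ht0).
  pose proof (Rle_abs (k t)). pose proof (Rle_abs (- k t0)). rewrite Rabs_Ropp in *. lra.
Qed.

Lemma laplacian_quadratic_form N (a : Fin.t N -> Fin.t N -> R) (z : Fin.t N -> R) :
  (forall i j, a i j = a j i) ->
  fsum N (fun i => z i * fsum N (fun j => a i j * (z j - z i))) =
  - / 2 * fsum N (fun i => fsum N (fun j => a i j * (z i - z j) ^ 2)).
Proof.
  intros Hs.
  set (G := fun i j => a i j * z i * (z j - z i)).
  assert (E1 : fsum N (fun i => z i * fsum N (fun j => a i j * (z j - z i)))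
               = fsum N (fun i => fsum N (fun j => G i j))).
  { apply fsum_ext; intros i. rewrite <- fsum_scale. apply fsum_ext; intros j. unfold G; ring. }
  (* symmetrising the double sum turns [G i j + G j i] into [- a i j (z i - z j)^2] *)
  assert (E2 : fsum N (fun i => fsum N (fun j => G i j)) + fsum N (fun i => fsum N (fun j => G j i))
               = - fsum N (fun i => fsum N (fun j => a i j * (z i - z j) ^ 2))).
  { rewrite <- fsum_add, <- (Rmult_1_l (fsum N (fun i => fsum N (fun j => a i j * (z i - z j) ^ 2)))).
    rewrite Ropp_mult_distr_l, <- fsum_scale.
    apply fsum_ext; intros i. rewrite <- fsum_add, <- fsum_scale.
    apply fsum_ext; intros j. unfold G. rewrite (Hs j i). ring. }
  rewrite (fsum_comm N N (fun j i => G i j)) in E2. rewrite E1. lra.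
Qed.

Definition in_box {D} (M : R) (z : vec D) : Prop := forall c, Rabs (z c) <= M.

Definition strictly_increasing (phi : nat -> nat) : Prop := forall k, (phi k < phi (S k))%nat.

Lemma strictly_increasing_lt phi :
  strictly_increasing phi -> forall i j, (i < j)%nat -> (phi i < phi j)%nat.
Proof.
  intros H i j; induction j as [|j IH]; intros Hij; [lia|].
  specialize (H j). destruct (Nat.eq_dec i j) as [->|]; [lia|]. specialize (IH ltac:(lia)). lia.
Qed.

Lemma strictly_increasing_ge phi : strictly_increasing phi -> forall k, (k <= phi k)%nat.
Proof. intros H k; induction k; [lia|]. specialize (H k); lia. Qed.

Lemma strictly_increasing_comp phi1 phi2 :
  strictly_increasing phi1 -> strictly_increasing phi2 -> strictly_increasing (fun k => phi1 (phi2 k)).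
Proof. intros H1 H2 k. apply strictly_increasing_lt; auto. Qed.

Lemma Un_cv_subseq u l phi : strictly_increasing phi -> Un_cv u l -> Un_cv (fun k => u (phi k)) l.
Proof.
  intros Hs H eps He. destruct (H eps He) as [K HK]. exists K; intros k Hk.
  apply HK. pose proof (strictly_increasing_ge phi Hs k). lia.
Qed.

Lemma eventually_inv_succ_lt eps : 0 < eps -> exists K, forall k, (K <= k)%nat -> / (INR k + 1) < eps.
Proof.
  intros He. destruct (archimed_cor1 eps He) as [K [HK HK0]]. exists K; intros k Hk.
  apply le_INR in Hk. apply lt_0_INR in HK0.
  apply Rlt_trans with (/ INR K); [apply Rinv_lt_contravar; nra | exact HK].
Qed.

Lemma eventually_forall_fin D (P : nat -> Fin.t D -> Prop) :
  (forall c, exists K, forall k, (K <= k)%nat -> P k c) ->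
  exists K, forall k, (K <= k)%nat -> forall c, P k c.
Proof.
  induction D as [|D IH]; intros H.
  - exists 0%nat; intros k _ c. apply (Fin.case0 _ c).
  - destruct (H Fin.F1) as [K1 HK1]. destruct (IH (fun k c => P k (Fin.FS c))) as [K2 HK2].
    { intros c; apply H. }
    exists (Nat.max K1 K2); intros k Hk c.
    apply (Fin.caseS' c (P k)); [apply HK1; lia | intros; apply HK2; lia].
Qed.

Lemma eventually_vnorm_lt D (z : nat -> vec D) p :
  (forall c, Un_cv (fun k => z k c) (p c)) ->
  forall del, 0 < del -> exists K, forall k, (K <= k)%nat -> vnorm (vsub (z k) p) < del.
Proof.
  intros H del Hd. pose proof (pos_INR D).
  set (e := del / (INR D + 1)). assert (He : 0 < e) by (apply Rdiv_lt_0_compat; lra).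
  destruct (eventually_forall_fin D (fun k c => Rabs (z k c - p c) < e)) as [K HK].
  { intros c. exact (H c e He). }
  exists K; intros k Hk. eapply Rle_lt_trans.
  - apply vnorm_le_of_Rabs_le. intros c. left. exact (HK k Hk c).
  - unfold e. apply (Rmult_lt_reg_r (INR D + 1)); [lra|]. field_simplify; nra.
Qed.

Lemma Un_cv_of_vnorm_vsub_cv0 D (z z' : nat -> vec D) p :
  (forall c, Un_cv (fun k => z k c) (p c)) -> Un_cv (fun k => vnorm (vsub (z k) (z' k))) 0 ->
  forall c, Un_cv (fun k => z' k c) (p c).
Proof.
  intros Hz Hzz' c e He. destruct (Hz c (e / 2)) as [K1 HK1]; [lra|].
  destruct (Hzz' (e / 2)) as [K2 HK2]; [lra|].
  exists (Nat.max K1 K2); intros k Hk. specialize (HK1 k ltac:(lia)). specialize (HK2 k ltac:(lia)).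
  unfold Rdist in *. rewrite Rminus_0_r, Rabs_right in HK2 by (apply Rle_ge, vnorm_ge0).
  pose proof (Rabs_le_vnorm _ (vsub (z k) (z' k)) c) as Hc. unfold vsub at 1 in Hc.
  pose proof (Rabs_triang (- (z k c - z' k c)) (z k c - p c)). rewrite Rabs_Ropp in *.
  replace (- (z k c - z' k c) + (z k c - p c)) with (z' k c - p c) in * by ring. lra.
Qed.

Lemma bounded_seq_has_cv_subseq (u : nat -> R) M :
  (forall k, Rabs (u k) <= M) -> exists phi l, strictly_increasing phi /\ Un_cv (fun k => u (phi k)) l.
Proof.
  intros Hb.
  destruct (Bolzano_Weierstrass u (fun c => -M <= c <= M) (compact_P3 (-M) M)) as [l Hl].
  { intros k; specialize (Hb k). split; [pose proof (Rabs_Ropp (u k)) | ];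
      pose proof (Rle_abs (u k)); pose proof (Rle_abs (- u k)); lra. }
  assert (Hnear : forall Ne : nat * nat, exists p,
            (fst Ne <= p)%nat /\ Rabs (u p - l) < / (INR (snd Ne) + 1)).
  { intros [N0 e]. assert (Hp : 0 < / (INR e + 1)) by (apply Rinv_0_lt_compat; pose proof (pos_INR e); lra).
    destruct (Hl (disc l (mkposreal _ Hp)) N0) as [p [Hp1 Hp2]].
    - exists (mkposreal _ Hp). intros z Hz; exact Hz.
    - exists p; split; auto. }
  destruct (choice _ Hnear) as [g Hg].
  (* [phi (S k)] is chosen beyond [phi k], within [1/(k+2)] of [l] *)
  set (phi := fix phi (k : nat) : nat :=
         match k with O => g (O, O) | S k' => g (S (phi k'), S k') end).
  assert (Hp : forall k, Rabs (u (phi k) - l) < / (INR k + 1)).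
  { intros [|k]; [apply (Hg (O, O)) | apply (Hg (S (phi k), S k))]. }
  exists phi, l; split.
  - intros k. exact (proj1 (Hg (S (phi k), S k))).
  - intros eps He. destruct (eventually_inv_succ_lt eps He) as [K HK]. exists K; intros k Hk.
    specialize (HK k Hk). specialize (Hp k). unfold Rdist. lra.
Qed.

Lemma bounded_vseq_has_cv_subseq D (z : nat -> vec D) M :
  (forall k, in_box M (z k)) ->
  exists phi p, strictly_increasing phi /\ forall c, Un_cv (fun k => z (phi k) c) (p c).
Proof.
  revert z. induction D as [|D IH]; intros z Hb.
  - exists (fun k => k), (fun _ => 0); split; [intros k; lia|].
    intros c; apply (Fin.case0 (fun c => Un_cv (fun k => z k c) 0) c).
  - destruct (bounded_seq_has_cv_subseq (fun k => z k Fin.F1) M (fun k => Hb k Fin.F1))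
      as [phi1 [l [Hs1 Hc1]]].
    destruct (IH (fun k c => z (phi1 k) (Fin.FS c))) as [phi2 [p' [Hs2 Hc2]]].
    { intros k c; apply Hb. }
    exists (fun k => phi1 (phi2 k)), (fun c => Fin.caseS' c (fun _ => R) l p').
    split; [apply strictly_increasing_comp; auto|].
    intros c. apply (Fin.caseS' c (fun c => Un_cv (fun k => z (phi1 (phi2 k)) c)
                                                 (Fin.caseS' c (fun _ => R) l p'))).
    + apply (Un_cv_subseq (fun k => z (phi1 k) Fin.F1)); auto.
    + intros c'. apply Hc2.
Qed.

Lemma bounded_on_boxes_of_locally_bounded D1 D2 D3 (g : vec D1 -> vec D2 -> vec D3 -> R) :
  (forall p1 p2 p3, exists del B, 0 < del /\ forall z1 z2 z3,
     vnorm (vsub z1 p1) < del -> vnorm (vsub z2 p2) < del -> vnorm (vsub z3 p3) < del ->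
     g z1 z2 z3 <= B) ->
  forall M, exists B, forall z1 z2 z3, in_box M z1 -> in_box M z2 -> in_box M z3 -> g z1 z2 z3 <= B.
Proof.
  intros Hloc M. apply NNPP; intros Hn.
  assert (Hbig : forall j : nat, exists z : vec D1 * vec D2 * vec D3,
    in_box M (fst (fst z)) /\ in_box M (snd (fst z)) /\ in_box M (snd z) /\
    INR j < g (fst (fst z)) (snd (fst z)) (snd z)).
  { intros j. apply NNPP; intros Hj. apply Hn. exists (INR j). intros z1 z2 z3 H1 H2 H3.
    apply Rnot_lt_le; intros Hlt. apply Hj. exists (z1, z2, z3); simpl; auto. }
  destruct (choice _ Hbig) as [zs Hzs].
  destruct (bounded_vseq_has_cv_subseq D1 (fun k => fst (fst (zs k))) M) as [phi1 [p1 [Hs1 Hc1]]].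
  { intros; apply Hzs. }
  destruct (bounded_vseq_has_cv_subseq D2 (fun k => snd (fst (zs (phi1 k)))) M)
    as [phi2 [p2 [Hs2 Hc2]]].
  { intros; apply Hzs. }
  destruct (bounded_vseq_has_cv_subseq D3 (fun k => snd (zs (phi1 (phi2 k)))) M)
    as [phi3 [p3 [Hs3 Hc3]]].
  { intros; apply Hzs. }
  set (psi := fun k => phi1 (phi2 (phi3 k))).
  assert (Hs23 : strictly_increasing (fun k => phi2 (phi3 k))) by (apply strictly_increasing_comp; auto).
  assert (Hps : strictly_increasing psi) by exact (strictly_increasing_comp _ _ Hs1 Hs23).
  destruct (Hloc p1 p2 p3) as [del [B [Hd HB]]].
  destruct (eventually_vnorm_lt D1 (fun k => fst (fst (zs (psi k)))) p1) with (del := del)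
    as [K1 HK1]; auto.
  { intros c. exact (Un_cv_subseq (fun k => fst (fst (zs (phi1 k))) c) _ _ Hs23 (Hc1 c)). }
  destruct (eventually_vnorm_lt D2 (fun k => snd (fst (zs (psi k)))) p2) with (del := del)
    as [K2 HK2]; auto.
  { intros c. exact (Un_cv_subseq (fun k => snd (fst (zs (phi1 (phi2 k)))) c) _ _ Hs3 (Hc2 c)). }
  destruct (eventually_vnorm_lt D3 (fun k => snd (zs (psi k))) p3) with (del := del)
    as [K3 HK3]; auto.
  destruct (INR_archimed 1 B) as [K4 HK4]; [lra|].
  set (k := Nat.max (Nat.max K1 K2) (Nat.max K3 K4)).
  pose proof (HB _ _ _ (HK1 k ltac:(lia)) (HK2 k ltac:(lia)) (HK3 k ltac:(lia))).
  destruct (Hzs (psi k)) as [_ [_ [_ Hg]]].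
  assert (INR K4 <= INR (psi k)) by (apply le_INR; pose proof (strictly_increasing_ge psi Hps k); lia).
  lra.
Qed.

Definition pointwise_lipschitz {D E} (h : vec D -> vec E) : Prop :=
  forall p, exists del C, 0 < del /\ 0 <= C /\
    forall z, vnorm (vsub z p) < del -> forall r, Rabs (h z r - h p r) <= C * vnorm (vsub z p).

Lemma C1_map_pointwise_lipschitz D E (h : vec D -> vec E) : C1_map h -> pointwise_lipschitz h.
Proof.
  intros [J [HJ _]] p. destruct (HJ p 1 Rlt_0_1) as [del [Hd H]].
  set (C0 := fsum E (fun r => fsum D (fun c => Rabs (J p r c)))).
  assert (0 <= C0) by (apply fsum_ge0; intros; apply fsum_ge0; intros; apply Rabs_pos).
  exists del, (1 + C0); split; [auto | split; [lra|]].
  intros z Hz r. specialize (H (vsub z p) Hz).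
  replace (vadd p (vsub z p)) with z in H
    by (apply functional_extensionality; intros; unfold vadd, vsub; lra).
  pose proof (Rabs_le_vnorm _ (vsub (vsub (h z) (h p)) (matvec (J p) (vsub z p))) r) as Hr.
  pose proof (Rabs_matvec_le _ _ (J p) (vsub z p) r) as HM. fold C0 in HM.
  unfold vsub at 1 2 in Hr.
  pose proof (Rabs_triang (h z r - h p r - matvec (J p) (vsub z p) r) (matvec (J p) (vsub z p) r)).
  replace (h z r - h p r - matvec (J p) (vsub z p) r + matvec (J p) (vsub z p) r)
    with (h z r - h p r) in * by ring.
  lra.
Qed.

Lemma pointwise_lipschitz_bounded_on_boxes D E (h : vec D -> vec E) :
  pointwise_lipschitz h -> forall M, exists Y, forall z, in_box M z -> in_box Y (h z).
Proof.
  intros Hl M.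
  destruct (bounded_on_boxes_of_locally_bounded D D D (fun z _ _ => fsum E (fun r => Rabs (h z r))))
    with (M := M) as [Y HY].
  - intros p1 p2 p3. destruct (Hl p1) as [del [C [Hd [HC H]]]].
    exists del, (fsum E (fun r => Rabs (h p1 r) + C * del)). split; auto.
    intros z1 z2 z3 H1 _ _. apply fsum_le; intros r. specialize (H z1 H1 r).
    assert (C * vnorm (vsub z1 p1) <= C * del) by (apply Rmult_le_compat_l; lra).
    pose proof (Rabs_triang (h z1 r - h p1 r) (h p1 r)).
    replace (h z1 r - h p1 r + h p1 r) with (h z1 r) in * by ring. lra.
  - exists Y. intros z Hz r. eapply Rle_trans; [|apply (HY z z z Hz Hz Hz)].
    apply (fsum_ge_term E (fun r => Rabs (h z r))). intros; apply Rabs_pos.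
Qed.

Lemma pointwise_lipschitz_unif_cont_on_boxes D E (h : vec D -> vec E) :
  pointwise_lipschitz h -> forall M eps, 0 < eps -> exists del, 0 < del /\
    forall z z', in_box M z -> vnorm (vsub z z') < del -> forall r, Rabs (h z r - h z' r) < eps.
Proof.
  intros Hh M eps He. apply NNPP; intros Hn.
  assert (Hbad : forall j : nat, exists zz : vec D * vec D * Fin.t E,
    in_box M (fst (fst zz)) /\ vnorm (vsub (fst (fst zz)) (snd (fst zz))) < / (INR j + 1) /\
    eps <= Rabs (h (fst (fst zz)) (snd zz) - h (snd (fst zz)) (snd zz))).
  { intros j. apply NNPP; intros Hj. apply Hn. exists (/ (INR j + 1)). split.
    - apply Rinv_0_lt_compat; pose proof (pos_INR j); lra.
    - intros z z' Hz Hzz r. apply Rnot_le_lt; intros Hle. apply Hj. exists (z, z', r); simpl; auto. }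
  destruct (choice _ Hbad) as [zs Hzs].
  set (z := fun j => fst (fst (zs j))). set (z' := fun j => snd (fst (zs j))).
  destruct (bounded_vseq_has_cv_subseq D z M) as [phi [p [Hs Hc]]]; [intros; apply Hzs|].
  assert (Hclose : Un_cv (fun j => vnorm (vsub (z j) (z' j))) 0).
  { intros e He'. destruct (eventually_inv_succ_lt e He') as [K HK]. exists K; intros j Hj.
    destruct (Hzs j) as [_ [Hv _]]. specialize (HK j Hj). unfold Rdist, z, z'.
    rewrite Rminus_0_r, Rabs_right by (apply Rle_ge, vnorm_ge0). lra. }
  pose proof (Un_cv_of_vnorm_vsub_cv0 D _ _ p Hc (Un_cv_subseq _ _ phi Hs Hclose)) as Hc'.
  destruct (Hh p) as [del [C [Hd [HC Hl]]]].
  set (e1 := Rmin del (eps / (2 * (C + 1)))).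
  assert (He1 : 0 < e1) by (apply Rmin_glb_lt; auto; apply Rdiv_lt_0_compat; lra).
  destruct (eventually_vnorm_lt D (fun k => z (phi k)) p Hc e1 He1) as [K1 HK1].
  destruct (eventually_vnorm_lt D (fun k => z' (phi k)) p Hc' e1 He1) as [K2 HK2].
  set (k := Nat.max K1 K2). specialize (HK1 k ltac:(lia)). specialize (HK2 k ltac:(lia)).
  destruct (Hzs (phi k)) as [_ [_ Hge]]. set (r := snd (zs (phi k))) in *.
  fold (z (phi k)) (z' (phi k)) in Hge.
  assert (E1 : e1 <= del) by apply Rmin_l. assert (E2 : e1 <= eps / (2 * (C + 1))) by apply Rmin_r.
  pose proof (Hl (z (phi k)) ltac:(lra) r). pose proof (Hl (z' (phi k)) ltac:(lra) r).
  assert (C * e1 < eps / 2).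
  { apply Rle_lt_trans with (C * (eps / (2 * (C + 1)))); [apply Rmult_le_compat_l; lra|].
    apply (Rmult_lt_reg_r (2 * (C + 1))); [lra|]. field_simplify; nra. }
  pose proof (Rabs_triang (h (z (phi k)) r - h p r) (- (h (z' (phi k)) r - h p r))).
  rewrite Rabs_Ropp in *.
  replace (h (z (phi k)) r - h p r + - (h (z' (phi k)) r - h p r))
    with (h (z (phi k)) r - h (z' (phi k)) r) in * by ring.
  pose proof (vnorm_ge0 _ (vsub (z (phi k)) p)). pose proof (vnorm_ge0 _ (vsub (z' (phi k)) p)).
  assert (C * vnorm (vsub (z (phi k)) p) <= C * e1) by (apply Rmult_le_compat_l; lra).
  assert (C * vnorm (vsub (z' (phi k)) p) <= C * e1) by (apply Rmult_le_compat_l; lra).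
  lra.
Qed.

Lemma loc_lipschitz3_bounded_on_boxes n q (f : vec n -> vec q -> vec q -> vec n) :
  loc_lipschitz3 f -> forall M, exists B,
    forall x u d, in_box M x -> in_box M u -> in_box M d -> in_box B (f x u d).
Proof.
  intros Hf M.
  destruct (bounded_on_boxes_of_locally_bounded n q q (fun x u d => fsum n (fun c => Rabs (f x u d c))))
    with (M := M) as [B HB].
  - intros p1 p2 p3. destruct (Hf p1 p2 p3) as [del [L [Hd [HL H]]]].
    exists (del / 3), (fsum n (fun c => Rabs (f p1 p2 p3 c) + L * del)). split; [lra|].
    intros z1 z2 z3 H1 H2 H3. apply fsum_le; intros c.
    pose proof (vnorm_ge0 _ (vsub z1 p1)). pose proof (vnorm_ge0 _ (vsub z2 p2)).
    pose proof (vnorm_ge0 _ (vsub z3 p3)).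
    set (dz := sqrt (vnorm (vsub z1 p1) ^ 2 + vnorm (vsub z2 p2) ^ 2 + vnorm (vsub z3 p3) ^ 2)).
    assert (Hdz : dz < del).
    { apply Rle_lt_trans with (vnorm (vsub z1 p1) + vnorm (vsub z2 p2) + vnorm (vsub z3 p3)); [|lra].
      unfold dz. rewrite <- (sqrt_pow2 (vnorm (vsub z1 p1) + vnorm (vsub z2 p2) + vnorm (vsub z3 p3)))
        by lra.
      apply sqrt_le_1_alt. nra. }
    assert (Hp : sqrt (vnorm (vsub p1 p1) ^ 2 + vnorm (vsub p2 p2) ^ 2 + vnorm (vsub p3 p3) ^ 2) < del).
    { rewrite !vnorm_vsub_diag. replace (0 ^ 2 + 0 ^ 2 + 0 ^ 2) with 0 by ring. rewrite sqrt_0; lra. }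
    specialize (H z1 p1 z2 p2 z3 p3 Hdz Hp).
    assert (L * dz <= L * del) by (apply Rmult_le_compat_l; lra).
    pose proof (Rabs_le_vnorm _ (vsub (f z1 z2 z3) (f p1 p2 p3)) c) as Hc. unfold vsub at 1 in Hc.
    pose proof (Rabs_triang (f z1 z2 z3 c - f p1 p2 p3 c) (f p1 p2 p3 c)).
    replace (f z1 z2 z3 c - f p1 p2 p3 c + f p1 p2 p3 c) with (f z1 z2 z3 c) in * by ring.
    fold dz in H. lra.
  - exists B. intros x u d Hx Hu Hd c. eapply Rle_trans; [|apply (HB x u d); auto].
    apply (fsum_ge_term n (fun c => Rabs (f x u d c))). intros; apply Rabs_pos.
Qed.

Lemma in_box_le D (z : vec D) M1 M2 : M1 <= M2 -> in_box M1 z -> in_box M2 z.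
Proof. intros H Hz c. specialize (Hz c). lra. Qed.

Lemma in_box_of_vnorm_le D (z : vec D) M : vnorm z <= M -> in_box M z.
Proof. intros H c. eapply Rle_trans; [apply Rabs_le_vnorm | exact H]. Qed.

Lemma INR_gt0_of_fin N (i : Fin.t N) : 0 < INR N.
Proof. destruct i; apply lt_0_INR; lia. Qed.

Section ClosedLoop.

Variables (N n q : nat) (m : Fin.t N -> nat).
Variables (f : vec n -> vec q -> vec q -> vec n) (h : vec n -> vec q).
Variables (Rm : forall i : Fin.t N, mat q (m i)) (s : forall i : Fin.t N, vec (m i) -> vec (m i)).
Variables (a : Fin.t N -> Fin.t N -> R) (gamma : Fin.t N -> R).
Variables (x : Fin.t N -> R -> vec n) (w xi : forall i : Fin.t N, R -> vec (m i)).
Variable (k : Fin.t N -> R -> R).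

Definition output i t : vec q := h (x i t).
Definition coupling i t : vec q := vfsum (fun j => vscale (a i j) (vsub (output j t) (output i t))).
Definition disturbance i t : vec q := matvec (Rm i) (w i t).
Definition input i t : vec q :=
  vadd (vopp (matvec (Rm i) (xi i t))) (vscale (k i t) (coupling i t)).

Hypothesis f_lipschitz : loc_lipschitz3 f.
Hypothesis h_C1 : C1_map h.
Hypothesis s_exo : forall i, exo_ok (s i).
Hypothesis a_sym : forall i j, a i j = a j i.
Hypothesis a_ge0 : forall i j, 0 <= a i j.
Hypothesis a_connected : forall i j, clos_refl_trans (Fin.t N) (fun i j => 0 < a i j) i j.
Hypothesis gamma_gt0 : forall i, 0 < gamma i.
Hypothesis x_dyn :
  forall i t, 0 < t -> has_vderiv (x i) (f (x i t) (input i t) (disturbance i t)) t.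
Hypothesis w_dyn : forall i t, 0 < t -> has_vderiv (w i) (s i (w i t)) t.
Hypothesis k_dyn :
  forall i t, 0 < t -> derivable_pt_lim (k i) t (gamma i * vdot (coupling i t) (coupling i t)).
Variable M : R.
Hypothesis trajectory_bounded : forall i t, 0 <= t ->
  vnorm (x i t) <= M /\ vnorm (xi i t) <= M /\ Rabs (k i t) <= M.

Lemma coupling_E i t r : coupling i t r = fsum N (fun l => a i l * (output l t r - output i t r)).
Proof. reflexivity. Qed.

Lemma output_bounded : exists Y, forall i t, 0 <= t -> in_box Y (output i t).
Proof.
  destruct (pointwise_lipschitz_bounded_on_boxes n q h (C1_map_pointwise_lipschitz n q h h_C1) M)
    as [Y HY].
  exists Y. intros i t Ht. apply HY, in_box_of_vnorm_le, trajectory_bounded, Ht.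
Qed.

Lemma coupling_bounded : exists P, forall i t, 0 <= t -> in_box P (coupling i t).
Proof.
  destruct output_bounded as [Y HY].
  set (A := fsum N (fun j => fsum N (fun l => a j l))).
  exists (2 * Y * A). intros i t Ht r. rewrite coupling_E.
  eapply Rle_trans; [apply Rabs_fsum_le|].
  apply Rle_trans with (fsum N (fun l => 2 * Y * a i l)).
  - apply fsum_le; intros l. rewrite Rabs_mult, (Rabs_right (a i l)) by (apply Rle_ge; auto).
    rewrite (Rmult_comm (2 * Y)). apply Rmult_le_compat_l; [apply a_ge0|].
    pose proof (HY l t Ht r). pose proof (HY i t Ht r).
    pose proof (Rabs_triang (output l t r) (- output i t r)). rewrite Rabs_Ropp in *.
    unfold Rminus. lra.
  - rewrite fsum_scale. pose proof (HY i t Ht r). pose proof (Rabs_pos (output i t r)).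
    apply Rmult_le_compat_l; [lra|].
    apply (fsum_ge_term N (fun j => fsum N (fun l => a j l))). intros; apply fsum_ge0; auto.
Qed.

Definition Rm_bound : R := fsum N (fun i => fsum q (fun r => fsum (m i) (fun c => Rabs (Rm i r c)))).

Lemma Rm_bound_ge0 : 0 <= Rm_bound.
Proof. repeat (apply fsum_ge0; intros). apply Rabs_pos. Qed.

Lemma Rabs_matvec_le_Rm_bound i v r : Rabs (matvec (Rm i) v r) <= Rm_bound * vnorm v.
Proof.
  eapply Rle_trans; [apply Rabs_matvec_le|]. apply Rmult_le_compat_r; [apply vnorm_ge0|].
  apply (fsum_ge_term N (fun i => fsum q (fun r => fsum (m i) (fun c => Rabs (Rm i r c))))).
  intros; repeat (apply fsum_ge0; intros); apply Rabs_pos.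
Qed.

(* The dynamics are only available for t > 0, so time estimates are taken on (1/2, oo). *)
Lemma disturbance_bounded : exists B, forall i t, 1 / 2 <= t -> in_box B (disturbance i t).
Proof.
  set (W := fsum N (fun i => vnorm (w i (1 / 2)))).
  exists (Rm_bound * W). intros i t Ht r. eapply Rle_trans; [apply Rabs_matvec_le_Rm_bound|].
  apply Rmult_le_compat_l; [apply Rm_bound_ge0|]. eapply Rle_trans.
  - apply (exo_vnorm_nonincreasing _ (s i) (w i) 0 (s_exo i) (w_dyn i) (1 / 2)); [lra | exact Ht].
  - apply (fsum_ge_term N (fun i => vnorm (w i (1 / 2)))). intros; apply vnorm_ge0.
Qed.

Lemma input_bounded : exists U, forall i t, 0 <= t -> in_box U (input i t).
Proof.
  destruct coupling_bounded as [P HP].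
  exists (Rm_bound * M + M * P). intros i t Ht r.
  destruct (trajectory_bounded i t Ht) as [_ [Hxi Hk]].
  specialize (HP i t Ht r). pose proof (Rabs_matvec_le_Rm_bound i (xi i t) r).
  pose proof (Rm_bound_ge0). pose proof (Rabs_pos (k i t)). pose proof (Rabs_pos (coupling i t r)).
  unfold input, vadd, vopp, vscale.
  pose proof (Rabs_triang (- matvec (Rm i) (xi i t) r) (k i t * coupling i t r)).
  rewrite Rabs_Ropp, Rabs_mult in *.
  assert (Rm_bound * vnorm (xi i t) <= Rm_bound * M) by (apply Rmult_le_compat_l; auto).
  assert (Rabs (k i t) * Rabs (coupling i t r) <= M * P) by (apply Rmult_le_compat; auto).
  lra.
Qed.

Lemma state_lipschitz : exists B, forall i c t t', 1 / 2 < t -> 1 / 2 < t' ->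
  Rabs (x i t c - x i t' c) <= B * Rabs (t - t').
Proof.
  destruct input_bounded as [U HU]. destruct disturbance_bounded as [Dd HD].
  set (Mall := Rabs M + Rabs U + Rabs Dd).
  pose proof (Rle_abs M). pose proof (Rle_abs U). pose proof (Rle_abs Dd).
  pose proof (Rabs_pos M). pose proof (Rabs_pos U). pose proof (Rabs_pos Dd).
  destruct (loc_lipschitz3_bounded_on_boxes n q f f_lipschitz Mall) as [B HB].
  exists B. intros i c.
  apply (lipschitz_of_deriv_bounded _ (fun t => f (x i t) (input i t) (disturbance i t) c) (1 / 2)).
  - intros t Ht. apply x_dyn. lra.
  - intros t Ht. apply HB.
    + apply (in_box_le _ _ M); [unfold Mall; lra|].
      apply in_box_of_vnorm_le, trajectory_bounded. lra.
    + apply (in_box_le _ _ U); [unfold Mall; lra | apply HU; lra].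
    + apply (in_box_le _ _ Dd); [unfold Mall; lra | apply HD; lra].
Qed.

Lemma output_unif_cont i r : unif_cont_from 1 (fun t => output i t r).
Proof.
  intros e He. destruct state_lipschitz as [B HB].
  destruct (pointwise_lipschitz_unif_cont_on_boxes n q h (C1_map_pointwise_lipschitz n q h h_C1) M e He)
    as [dh [Hdh Hh]].
  set (Kn := INR n * Rabs B).
  assert (HKn : 0 <= Kn) by (apply Rmult_le_pos; [apply pos_INR | apply Rabs_pos]).
  exists (dh / (Kn + 1)); split; [apply Rdiv_lt_0_compat; lra|].
  intros t t' Ht Ht' Htt. apply Hh.
  - apply in_box_of_vnorm_le, trajectory_bounded. lra.
  - eapply Rle_lt_trans.
    + apply (vnorm_le_of_Rabs_le _ _ (Rabs B * Rabs (t - t'))). intros c.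
      eapply Rle_trans; [apply (HB i c t t'); lra|].
      apply Rmult_le_compat_r; [apply Rabs_pos | apply Rle_abs].
    + apply Rle_lt_trans with (Kn * (dh / (Kn + 1))).
      * unfold Kn. rewrite Rmult_assoc. apply Rmult_le_compat_l; [apply pos_INR|].
        apply Rmult_le_compat_l; [apply Rabs_pos | exact Htt].
      * apply (Rmult_lt_reg_r (Kn + 1)); [lra|]. field_simplify; lra.
Qed.

Lemma coupling_unif_cont i r : unif_cont_from 1 (fun t => coupling i t r).
Proof.
  apply (unif_cont_from_ext 1 (fun t => fsum N (fun l => a i l * (output l t r - output i t r)))).
  - apply (unif_cont_from_fsum 1 N (fun t l => a i l * (output l t r - output i t r))). intros l.
    apply (unif_cont_from_scale 1 (a i l) (fun t => output l t r - output i t r)).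
    apply unif_cont_from_sub; apply output_unif_cont.
  - intros t. apply coupling_E.
Qed.

Lemma coupling_vanishes i r : vanishes (fun t => coupling i t r).
Proof.
  apply (vanishes_of_bounded_gain (k i) (fun t => gamma i * vdot (coupling i t) (coupling i t))
           _ (gamma i) M 1); [apply gamma_gt0 | lra | apply k_dyn | | | apply coupling_unif_cont].
  - intros t _. apply Rmult_le_compat_l; [left; apply gamma_gt0|].
    replace (coupling i t r ^ 2) with (coupling i t r * coupling i t r) by ring.
    apply (fsum_ge_term q (fun c => coupling i t c * coupling i t c)). intros; nra.
  - intros t Ht. apply trajectory_bounded. lra.
Qed.

(* The Laplacian energy [sum_i sum_j a i j (y_i - y_j)^2 = -2 sum_i y_i rho_i] is driven to zero
   by the vanishing couplings, and it dominates every edge term. *)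
Lemma neighbour_outputs_converge i j r :
  0 < a i j -> vanishes (fun t => output i t r - output j t r).
Proof.
  intros Hij. destruct output_bounded as [Y HY].
  set (Q := fun t => fsum N (fun i => fsum N (fun l => a i l * (output i t r - output l t r) ^ 2))).
  assert (HQ : vanishes Q).
  { apply (vanishes_dominated _ (fun t => fsum N (fun i => 2 * Y * Rabs (coupling i t r)))).
    - apply vanishes_fsum. intros l. apply vanishes_scale, vanishes_Rabs, coupling_vanishes.
    - exists 0. intros t Ht.
      assert (EQ : Q t = -2 * fsum N (fun l => output l t r * coupling l t r)).
      { unfold Q. rewrite (fsum_ext N (fun l => output l t r * coupling l t r) (fun l => output l t r *
          fsum N (fun l' => a l l' * (output l' t r - output l t r)))) by (intros; rewrite coupling_E; reflexivity).
        rewrite laplacian_quadratic_form by exact a_sym. field. }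
      assert (fsum N (fun l => Rabs (output l t r * coupling l t r))
              <= fsum N (fun l => Y * Rabs (coupling l t r))).
      { apply fsum_le; intros l. rewrite Rabs_mult.
        pose proof (HY l t Ht r). pose proof (Rabs_pos (coupling l t r)). nra. }
      pose proof (Rabs_fsum_le N (fun l => output l t r * coupling l t r)).
      rewrite (fsum_ext N (fun l => 2 * Y * Rabs (coupling l t r)) (fun l => 2 * (Y * Rabs (coupling l t r))))
        by (intros; ring).
      rewrite EQ, Rabs_mult, Rabs_left, fsum_scale by lra. lra. }
  apply (vanishes_of_sq _ (a i j) Hij), (vanishes_dominated _ Q HQ). exists 0; intros t _.
  rewrite Rabs_right by (apply Rle_ge, Rmult_le_pos; [lra | apply pow2_ge_0]).
  assert (Hterm : forall i l, 0 <= a i l * (output i t r - output l t r) ^ 2)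
    by (intros; apply Rmult_le_pos; [apply a_ge0 | apply pow2_ge_0]).
  eapply Rle_trans; [apply (fsum_ge_term N (fun l => a i l * (output i t r - output l t r) ^ 2) j); auto|].
  apply (fsum_ge_term N (fun i => fsum N (fun l => a i l * (output i t r - output l t r) ^ 2)) i).
  intros; apply fsum_ge0; auto.
Qed.

Lemma outputs_converge i j r : vanishes (fun t => output i t r - output j t r).
Proof.
  induction (a_connected i j) as [i j Hij | i | i j l _ IH1 _ IH2].
  - apply neighbour_outputs_converge, Hij.
  - apply (vanishes_ext (fun _ => 0)); [|intros; ring].
    intros e He; exists 0; intros; rewrite Rabs_R0; lra.
  - apply (vanishes_ext (fun t => (output i t r - output j t r) + (output j t r - output l t r)));
      [apply vanishes_add; auto | intros; ring].
Qed.

Lemma outputs_synchronize i eps : 0 < eps -> exists T, forall t, T <= t ->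
  vnorm (vsub (output i t) (vscale (/ INR N) (vfsum (fun j => output j t)))) < eps.
Proof.
  intros He.
  pose proof (INR_gt0_of_fin N i) as HN.
  assert (Hc : forall r, vanishes (fun t =>
            vsub (output i t) (vscale (/ INR N) (vfsum (fun j => output j t))) r)).
  { intros r. apply (vanishes_ext (fun t => / INR N * fsum N (fun j => output i t r - output j t r))).
    - apply vanishes_scale, vanishes_fsum. intros j. apply outputs_converge.
    - intros t. unfold vsub, vscale, vfsum. rewrite fsum_sub, fsum_const. field. lra. }
  assert (Hn : vanishes (fun t =>
            vnorm (vsub (output i t) (vscale (/ INR N) (vfsum (fun j => output j t)))))).
  { apply (vanishes_dominated _ (fun t => fsum q (fun r =>
             Rabs (vsub (output i t) (vscale (/ INR N) (vfsum (fun j => output j t))) r)))).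
    - apply vanishes_fsum. intros r. apply vanishes_Rabs, Hc.
    - exists 0. intros t _. rewrite Rabs_right by (apply Rle_ge, vnorm_ge0). apply vnorm_le_sum_Rabs. }
  destruct (Hn eps He) as [T HT]. exists T. intros t Ht. specialize (HT t Ht).
  rewrite Rabs_right in HT by (apply Rle_ge, vnorm_ge0). exact HT.
Qed.

End ClosedLoop.

Theorem theorem1
  (N n q : nat) (m : Fin.t N -> nat)
  (f : vec n -> vec q -> vec q -> vec n) (h : vec n -> vec q) (sigma : R)
  (Rm : forall i : Fin.t N, mat q (m i))
  (s : forall i : Fin.t N, vec (m i) -> vec (m i))
  (a : Fin.t N -> Fin.t N -> R) (gamma : Fin.t N -> R)
  (x : Fin.t N -> R -> vec n)
  (w : forall i : Fin.t N, R -> vec (m i))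
  (xi : forall i : Fin.t N, R -> vec (m i))
  (k : Fin.t N -> R -> R) :
  loc_lipschitz3 f -> C1_map h -> iOFP f h sigma ->
  (forall i, exo_ok (s i)) ->
  undirected_connected a ->
  (forall i, 0 < gamma i) ->
  let y := fun i t => h (x i t) in
  let rho := fun i t => vfsum (fun j => vscale (a i j) (vsub (y j t) (y i t))) in
  let d := fun i t => matvec (Rm i) (w i t) in
  let u := fun i t => vadd (vopp (matvec (Rm i) (xi i t))) (vscale (k i t) (rho i t)) in
  (forall i t, 0 < t ->
     has_vderiv (x i) (f (x i t) (u i t) (d i t)) t /\
     has_vderiv (w i) (s i (w i t)) t /\
     has_vderiv (xi i) (vsub (s i (xi i t)) (matTvec (Rm i) (rho i t))) t /\
     derivable_pt_lim (k i) t (gamma i * vdot (rho i t) (rho i t))) ->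
  (exists M, forall i t, 0 <= t ->
     vnorm (x i t) <= M /\ vnorm (xi i t) <= M /\ Rabs (k i t) <= M) ->
  forall i, forall eps, 0 < eps -> exists T, forall t, T <= t ->
    vnorm (vsub (y i t) (vscale (/ INR N) (vfsum (fun j => y j t)))) < eps.
Proof.
  intros Hf Hh _ Hs [Hsym [Hge0 [_ Hconn]]] Hgamma y rho d u Hdyn [M HM] i.
  exact (outputs_synchronize N n q m f h Rm s a gamma x w xi k Hf Hh Hs Hsym Hge0 Hconn Hgamma
           (fun i t Ht => proj1 (Hdyn i t Ht))
           (fun i t Ht => proj1 (proj2 (Hdyn i t Ht)))
           (fun i t Ht => proj2 (proj2 (proj2 (Hdyn i t Ht)))) M HM i).
Qed.
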